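(* Let $g\geq 1$. For any algebra morphism (representation) $\mathbb{Z}[\mathbb{H}_g]\to M_d(\mathbb{C})$, there exist integers $N,k\geq 1$ such that $(\sigma^{2N}-1)^k$ lies in its kernel. In particular $\mathbb{Z}[\mathbb{H}_g]$ admits no faithful finite-dimensional complex representation.
   Context: $\mathbb{H}_g$ is the Heisenberg group with presentation $\langle a_1,b_1,\dots,a_g,b_g,\sigma \mid [a_i,a_j],[b_i,b_j],[\sigma,a_i],[\sigma,b_i],[a_i,b_j]\sigma^{-2\delta_{ij}}\rangle$, where $\delta_{ij}$ is the Kronecker symbol. *)

From HB Require Import structures.
From mathcomp Require Import all_boot all_order all_algebra all_field.
Set Implicit Arguments. Unset Strict Implicit. Unset Printing Implicit Defensive.
Import Order.TTheory GRing.Theory Num.Theory.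
Local Open Scope ring_scope.

(* Integer power of a matrix (meaningful for invertible matrices). *)
Definition mxzpow (d : nat) (M : 'M[algC]_d) (z : int) : 'M[algC]_d :=
  match z with
  | Posz n => M ^+ n
  | Negz n => invmx M ^+ n.+1
  end.

Definition mxcomm (d : nat) (X Y : 'M[algC]_d) : 'M[algC]_d :=
  X * Y * invmx X * invmx Y.

(* A representation of Z[H_g] in M_d(C), i.e. a unital ring morphism
   Z[H_g] -> M_d(C), is the same as a group homomorphism H_g -> GL_d(C)
   (universal property of the group ring), i.e. (universal property of the
   presentation) invertible images A i, B i, S of the generators a_i, b_i,
   sigma satisfying the defining relations of H_g. *)
Definition heis_rep (g d : nat) (A B : 'I_g -> 'M[algC]_d) (S : 'M[algC]_d)
  : Prop :=
  [/\ (forall i, A i \in unitmx), (forall i, B i \in unitmx) & S \in unitmx]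
  /\ [/\ (forall i j, mxcomm (A i) (A j) = 1),
      (forall i j, mxcomm (B i) (B j) = 1),
      (forall i, mxcomm S (A i) = 1),
      (forall i, mxcomm S (B i) = 1)
    & (forall i j, mxcomm (A i) (B j) * mxzpow S (- (2 * (i == j)%:Z)) = 1)].

(* Elements of H_g in normal form a^x b^y sigma^z
   (x, y in Z^g, z in Z); every element of H_g is uniquely of this form,
   so these index the standard Z-basis of Z[H_g]. *)
Definition heis_elt (g : nat) : Type :=
  ({ffun 'I_g -> int} * {ffun 'I_g -> int} * int)%type.

Definition heis_img (g d : nat) (A B : 'I_g -> 'M[algC]_d) (S : 'M[algC]_d)
  (h : heis_elt g) : 'M[algC]_d :=
  (\prod_(i < g) mxzpow (A i) (h.1.1 i)) *
  (\prod_(i < g) mxzpow (B i) (h.1.2 i)) * mxzpow S h.2.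

(* The linear extension of the representation is not injective on Z[H_g]:
   some nonzero element sum_{h in s} c h * h (s duplicate-free) of Z[H_g]
   is mapped to 0. *)
Definition not_faithful (g d : nat) (A B : 'I_g -> 'M[algC]_d)
  (S : 'M[algC]_d) : Prop :=
  exists (s : seq (heis_elt g)) (c : heis_elt g -> int),
    [/\ uniq s, has (fun h => c h != 0) s
      & \sum_(h <- s) (c h)%:~R *: heis_img A B S h = 0].

(* Let a, b, s be the images of a_1, b_1, sigma and t = s^2. Since s is
   central, a and b commute with t, and the relation [a,b] = s^2 reads
   a b = t b a. Both a and b preserve each eigenspace W of t, on which t acts
   as a scalar l; taking determinants of a b = t b a restricted to W gives
   l^(dim W) = 1, so every eigenvalue of t is a d!-th root of unity. Hence
   (X^(d!) - 1)^d is a multiple of the characteristic polynomial of t, and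
   Cayley-Hamilton gives (s^(2 d!) - 1)^d = 0. Expanding this integral
   polynomial in the central element sigma exhibits a nonzero element of
   Z[H_g] in the kernel. *)

From HB Require Import structures.
From mathcomp Require Import all_boot all_order all_algebra all_field.
Import Order.TTheory GRing.Theory Num.Theory.
Local Open Scope ring_scope.

Lemma conjmx_unit (F : fieldType) (m n : nat) (V : 'M[F]_(m, n)) (x : 'M_n) :
  row_free V -> stablemx V x -> stablemx V (invmx x) -> x \in unitmx ->
  conjmx V x \in unitmx.
Proof.
move=> freeV sx sxV ux.
have : conjmx V x *m conjmx V (invmx x) = 1%:M.
  by rewrite -conjmxM ?inE // mulmxV // conjmx_scalar.
by case/mulmx1_unit.
Qed.

Section TwistedCommutation.

Context {F : fieldType} {n : nat} {a b t : 'M[F]_n.+1}.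
Hypotheses (ua : a \in unitmx) (ub : b \in unitmx).
Hypotheses (comm_at : GRing.comm a t) (comm_bt : GRing.comm b t).
Hypothesis twisted : a * b = t * b * a.

Lemma twisted_comm_eigenvalue_expr_rank (l : F) :
  eigenvalue t l -> l ^+ \rank (eigenspace t l) = 1.
Proof.
move=> tl; set W := eigenspace t l; set V := row_base W.
have freeV : row_free V := row_base_free W.
have stable x : GRing.comm x t -> stablemx V x.
  by move=> cxt; rewrite stablemx_row_base comm_mx_stable_eigenspace.
have stableV x : GRing.comm x t -> stablemx V (invmx x).
  by move=> cxt; apply: stable; apply/esym; exact: (commrV (esym cxt)).
have det_unit x : GRing.comm x t -> x \in unitmx ->
    \det (conjmx V x) \is a GRing.unit.
  by move=> cxt ux; rewrite -unitmxE; apply: conjmx_unit => //;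
    [exact: stable | exact: stableV].
have ctb : GRing.comm (t * b) t by rewrite /GRing.comm -mulrA comm_bt.
have tV : conjmx V t = l%:M.
  by apply: conjmx_eigenvalue; rewrite ?eq_row_base.
have := congr1 (fun x => \det (conjmx V x)) twisted => /=.
rewrite -!mulmxE !conjmxM ?inE ?stable // tV !det_mulmx det_scalar.
move=> det_ab; apply: (mulIr (det_unit b comm_bt ub)).
apply: (mulIr (det_unit a comm_at ua)).
by rewrite /= -det_ab mul1r mulrC.
Qed.

Lemma twisted_comm_eigenvalue_expr_fact (l : F) :
  eigenvalue t l -> l ^+ (n.+1)`! = 1.
Proof.
move=> tl; have rank_gt0 : (0 < \rank (eigenspace t l))%N.
  by rewrite lt0n mxrank_eq0.
have /dvdnP [q ->] := dvdn_fact (introT andP (conj rank_gt0 (rank_leq_col _))).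
by rewrite mulnC exprM twisted_comm_eigenvalue_expr_rank // expr1n.
Qed.

End TwistedCommutation.

Lemma dvdp_prod_XsubC_exp (R : idomainType) (rs : seq R) (p : {poly R}) :
  all (root p) rs -> \prod_(z <- rs) ('X - z%:P) %| p ^+ size rs.
Proof.
elim: rs => [|z rs IH] /=; first by rewrite big_nil dvd1p.
case/andP=> pz prs; rewrite big_cons exprS dvdp_mul ?IH //.
by rewrite dvdp_XsubCl.
Qed.

Lemma horner_mx_exp_eq0_of_roots {F : closedFieldType} {n : nat}
    (t : 'M[F]_n.+1) (p : {poly F}) :
  (forall l, root (char_poly t) l -> root p l) -> horner_mx t p ^+ n.+1 = 0.
Proof.
move=> char_roots; have [rs char_t] := closed_field_poly_normal (char_poly t).
rewrite (monicP (char_poly_monic t)) scale1r in char_t.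
have size_rs : size rs = n.+1.
  by apply/eqP; rewrite -eqSS -(size_prod_XsubC rs id) -char_t size_char_poly.
have /dvdpP [q pq] : char_poly t %| p ^+ n.+1.
  rewrite char_t -size_rs dvdp_prod_XsubC_exp //; apply/allP => z zrs.
  by rewrite char_roots // char_t root_prod_XsubC.
by rewrite -rmorphXn pq rmorphM /= Cayley_Hamilton mulr0.
Qed.

Lemma horner_mx_sum (R : comNzRingType) (n : nat) (s : 'M[R]_n.+1)
    (p : {poly R}) :
  horner_mx s p = \sum_(i < size p) p`_i *: s ^+ i.
Proof.
rewrite -{1}[p]coefK poly_def rmorph_sum /=; apply: eq_bigr => i _.
by rewrite linearZ /= rmorphXn /= horner_mx_X.
Qed.

Lemma heis_img_sigma (g d : nat) (A B : 'I_g -> 'M[algC]_d) (S : 'M[algC]_d)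
    (i : nat) :
  heis_img A B S (([ffun => 0], [ffun => 0]), i%:Z) = S ^+ i.
Proof. by rewrite /heis_img /= !big1 ?mul1r // => j _; rewrite ffunE. Qed.

Lemma not_faithful_of_annihilating_poly {g n : nat}
    {A B : 'I_g -> 'M[algC]_n.+1} {S : 'M[algC]_n.+1} (P : {poly int}) :
  P != 0 -> horner_mx S (map_poly intr P) = 0 -> not_faithful A B S.
Proof.
move=> P_neq0 PS.
pose sigma_pow (i : nat) : heis_elt g := (([ffun => 0], [ffun => 0]), i%:Z).
exists [seq sigma_pow i | i <- index_iota 0 (size P)], (fun h => P`_(absz h.2)).
split.
- by rewrite map_inj_uniq ?iota_uniq // => i j [].
- apply/hasP; exists (sigma_pow (size P).-1).
    by rewrite map_f // mem_index_iota ltn_predL size_poly_gt0.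
  by rewrite /= -lead_coefE lead_coef_eq0.
rewrite -[RHS]PS horner_mx_sum size_map_poly_id0 ?intr_eq0 ?lead_coef_eq0 //.
rewrite big_map big_mkord; apply: eq_bigr => i _.
by rewrite heis_img_sigma coef_map.
Qed.

Lemma mxcomm_eq1_comm (n : nat) (x y : 'M[algC]_n.+1) :
  x \in unitmx -> y \in unitmx -> mxcomm x y = 1 -> GRing.comm x y.
Proof.
move=> ux uy; rewrite /mxcomm => /(congr1 (fun z => z * y * x)).
by rewrite mul1r -[invmx x]/x^-1 -[invmx y]/y^-1 divrK // divrK.
Qed.

Lemma heis_rep_twisted_comm {g n : nat} {A B : 'I_g -> 'M[algC]_n.+1}
    {S : 'M[algC]_n.+1} (i : 'I_g) :
  heis_rep A B S ->
  [/\ GRing.comm (A i) (S ^+ 2), GRing.comm (B i) (S ^+ 2)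
    & A i * B i = S ^+ 2 * B i * A i].
Proof.
case=> [[uA uB uS] [_ _ cSA cSB cAB]].
have cAS : GRing.comm (A i) S by apply/esym/mxcomm_eq1_comm.
have cBS : GRing.comm (B i) S by apply/esym/mxcomm_eq1_comm.
split; [exact: commrX | exact: commrX |].
have := cAB i i; rewrite eqxx /mxzpow /= => /(congr1 (fun z => z * S ^+ 2)).
rewrite mul1r -mulrA -[invmx S ^+ _]/(S^-1 ^+ 2) exprVn mulVr ?unitrX //.
rewrite mulr1 => <-.
by rewrite /mxcomm -[invmx (A i)]/(A i)^-1 -[invmx (B i)]/(B i)^-1 !divrK.
Qed.

Theorem mainTheorem4 (g d : nat) (A B : 'I_g -> 'M[algC]_d) (S : 'M[algC]_d) :
  (1 <= g)%N -> heis_rep A B S ->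
  (exists N k : nat, [/\ (1 <= N)%N, (1 <= k)%N &
      (S ^+ (2 * N) - 1) ^+ k = 0])
  /\ not_faithful A B S.
Proof.
case: d A B S => [|n] A B S g_gt0 rep.
  split; first by exists 1%N, 1%N; split => //; apply: flatmx0.
  pose h0 : heis_elt g := (([ffun => 0], [ffun => 0]), 0).
  by exists [:: h0], (fun _ => 1); split => //; apply: flatmx0.
pose i0 : 'I_g := Ordinal g_gt0; pose M := (n.+1)`!.
have [[uA uB _] _] := rep.
have [cA cB ab_eq] := heis_rep_twisted_comm i0 rep.
have unipotent : (S ^+ (2 * M) - 1) ^+ n.+1 = 0.
  have := horner_mx_exp_eq0_of_roots (S ^+ 2) ('X^M - 1).
  rewrite rmorphB rmorphXn /= horner_mx_X rmorph1 -exprM; apply=> l.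
  rewrite -eigenvalue_root_char => eigen_l; rewrite /root !hornerE subr_eq0.
  by rewrite (twisted_comm_eigenvalue_expr_fact (uA i0) (uB i0) cA cB ab_eq).
split; first by exists M, n.+1; split; rewrite ?fact_gt0.
apply: (not_faithful_of_annihilating_poly (('X^(2 * M) - 1) ^+ n.+1)).
  by rewrite monic_neq0 // monic_exp // monicXnsubC // muln_gt0 fact_gt0.
rewrite rmorphXn rmorphB /= map_polyXn rmorph1 -[RHS]unipotent.
by rewrite rmorphXn rmorphB /= rmorphXn /= horner_mx_X rmorph1.
Qed.
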